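(* Let $g(s)$ be a smooth one-parameter family of Hermitian metrics compatible with a fixed complex structure $J$, and let $h=\frac{\partial}{\partial s}g(s)$. Then $$\frac{\partial}{\partial s}|T|^2=\langle h,-2Q^1+Q^2\rangle+4\langle\nabla h,T\rangle,$$ where $$\langle\nabla h,T\rangle=\frac12g^{i\bar j}g^{k\bar l}g^{m\bar n}\left(\nabla_ih_{k\bar n}T_{\bar j\bar lm}+T_{ik\bar n}\nabla_{\bar j}h_{\bar lm}\right).$$
   Context: In local holomorphic coordinates write $g_{i\bar j}$, $g^{i\bar j}$; $h_{\bar l m}=h_{m\bar l}$. The Chern connection $\nabla$ has Christoffel symbols $\Gamma_{ij}^k=g^{k\bar l}\partial_i g_{j\bar l}$ and conjugates, mixed symbols zero. Torsion $T_{ij\bar k}=\partial_i g_{j\bar k}-\partial_j g_{i\bar k}$, $T_{\bar i\bar j k}=\overline{T_{ij\bar k}}$, $|T|^2=g^{i\bar p}g^{j\bar q}g^{r\bar k}T_{ij\bar k}T_{\bar p\bar qr}$. $Q^1_{i\bar j}=g^{k\bar l}g^{m\bar n}T_{ik\bar n}T_{\bar j\bar l m}$, $Q^2_{i\bar j}=g^{k\bar l}g^{m\bar n}T_{\bar l\bar n i}T_{km\bar j}$. For $(1,1)$ tensors, $\langle h,A\rangle=h^{i\bar j}A_{i\bar j}$ with $h^{i\bar j}=g^{i\bar q}g^{p\bar j}h_{p\bar q}$. *)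

From HB Require Import structures.
From mathcomp Require Import all_boot all_order all_algebra.
From mathcomp Require Import all_classical all_reals all_analysis.
From mathcomp Require Import complex.
Set Implicit Arguments. Unset Strict Implicit. Unset Printing Implicit Defensive.
Import Order.TTheory GRing.Theory Num.Theory.
Import numFieldNormedType.Exports.
Local Open Scope classical_set_scope.
Local Open Scope ring_scope.

Notation Pt R n := (R * ('rV[R]_n * 'rV[R]_n))%type.

Section HermitianDefs.
Variables (R : realType) (n : nat).
Local Notation Pt := (Pt R n).

(* Parameter space: a point is (s, (x, y)) with s the family parameter and
   z_j = x_j + i y_j the local holomorphic coordinates on C^n. *)

Fixpoint Ck_on (D : set Pt) (k : nat) (f : Pt -> R) : Prop :=
  match k with
  | 0 => forall p, D p -> {for p, continuous f}
  | k'.+1 => (forall p, D p -> differentiable f p) /\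
             (forall v : Pt, Ck_on D k' (fun p => 'D_v f p))
  end.
Definition smooth_on (D : set Pt) (f : Pt -> R) := forall k, Ck_on D k f.

Definition e_s : Pt := (1, (0, 0)).
Definition e_x (j : 'I_n) : Pt := (0, (delta_mx 0 j, 0)).
Definition e_y (j : 'I_n) : Pt := (0, (0, delta_mx 0 j)).

Definition Dc (v : Pt) (f : Pt -> R[i]) (p : Pt) : R[i] :=
  Complex ('D_v (fun q => complex.Re (f q)) p) ('D_v (fun q => complex.Im (f q)) p).

Definition dz (j : 'I_n) (f : Pt -> R[i]) (p : Pt) : R[i] :=
  2^-1 * (Dc (e_x j) f p - 'i%C * Dc (e_y j) f p).
Definition dzb (j : 'I_n) (f : Pt -> R[i]) (p : Pt) : R[i] :=
  2^-1 * (Dc (e_x j) f p + 'i%C * Dc (e_y j) f p).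

Definition ds (f : Pt -> R[i]) (p : Pt) : R[i] := Dc e_s f p.

Variable g : 'I_n -> 'I_n -> Pt -> R[i].  (* g i j p = g_{i \bar j}(p) *)

(* inverse metric: g^{i \bar j}, characterised by sum_j g^{i\bar j} g_{k\bar j} = delta_ik *)
Definition ginv (p : Pt) (i j : 'I_n) : R[i] :=
  invmx (\matrix_(a, b) g a b p) j i.

Definition hh (i j : 'I_n) (p : Pt) : R[i] := ds (g i j) p.

Definition Tor (i j k : 'I_n) (p : Pt) : R[i] := dz i (g j k) p - dz j (g i k) p.
Definition Torb (i j k : 'I_n) (p : Pt) : R[i] := conjc (Tor i j k p).

Definition normT2 (p : Pt) : R[i] :=
  \sum_(i < n) \sum_(j < n) \sum_(k < n) \sum_(a < n) \sum_(b < n) \sum_(r < n)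
    ginv p i a * ginv p j b * ginv p r k * Tor i j k p * Torb a b r p.

Definition Gam (i j k : 'I_n) (p : Pt) : R[i] :=
  \sum_(l < n) ginv p k l * dz i (g j l) p.

Definition nabh (i k m : 'I_n) (p : Pt) : R[i] :=
  dz i (hh k m) p - \sum_(q < n) Gam i k q p * hh q m p.
(* nabla_{\bar j} h_{\bar l m}, with h_{\bar l m} = h_{m \bar l} and
   Gamma_{\bar j \bar l}^{\bar q} = conj (Gamma_{jl}^q) *)
Definition nabhb (j l m : 'I_n) (p : Pt) : R[i] :=
  dzb j (hh m l) p - \sum_(q < n) conjc (Gam j l q p) * hh m q p.

Definition Q1 (i j : 'I_n) (p : Pt) : R[i] :=
  \sum_(k < n) \sum_(l < n) \sum_(m < n) \sum_(a < n)
    ginv p k l * ginv p m a * Tor i k a p * Torb j l m p.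
Definition Q2 (i j : 'I_n) (p : Pt) : R[i] :=
  \sum_(k < n) \sum_(l < n) \sum_(m < n) \sum_(a < n)
    ginv p k l * ginv p m a * Torb l a i p * Tor k m j p.

Definition pair_h (A : 'I_n -> 'I_n -> R[i]) (p : Pt) : R[i] :=
  \sum_(i < n) \sum_(j < n) \sum_(a < n) \sum_(q < n)
    ginv p i q * ginv p a j * hh a q p * A i j.

Definition pair_nabh_T (p : Pt) : R[i] :=
  2^-1 * \sum_(i < n) \sum_(j < n) \sum_(k < n) \sum_(l < n) \sum_(m < n) \sum_(a < n)
    ginv p i j * ginv p k l * ginv p m a *
    (nabh i k a p * Torb j l m p + Tor i k a p * nabhb j l m p).

End HermitianDefs.

Definition smooth_hermitian_family (R : realType) (n : nat)
  (D : set (Pt R n)) (g : 'I_n -> 'I_n -> Pt R n -> R[i]) : Prop :=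
  [/\ (forall i j, smooth_on D (fun p => complex.Re (g i j p)) /\
                   smooth_on D (fun p => complex.Im (g i j p))),
      (forall p, D p -> forall i j, g i j p = conjc (g j i p)) &
      (forall p, D p -> forall v : 'I_n -> R[i], (exists j, v j != 0) ->
          0 < \sum_(i < n) \sum_(j < n) v i * g i j p * conjc (v j))].

(* Differentiating in s, each inverse metric contributes
   -h^{..}, since d(g^-1)/ds = -g^-1 h g^-1: the first two slots (which agree by
   antisymmetry of T) give -2<h,Q^1> and the third gives -<h,Q^2>.  The torsion
   contributes d_i h_{jk} - d_j h_{ik}, because d/ds commutes with d_i (Schwarz);
   in terms of the Chern connection this is nabla_i h_{jk} - nabla_j h_{ik} plus
   g^{q l} T_{ijl} h_{qk}.  By antisymmetry of the conjugate torsion the nabla-part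
   contributes twice, and the correction is another <h,Q^2>.  The same happens for
   the conjugate torsion, and the total is <h,-2Q^1+Q^2> + 4<nabla h,T>. *)

From HB Require Import structures.
From mathcomp Require Import all_boot all_order all_algebra.
From mathcomp Require Import all_classical all_reals all_analysis.
From mathcomp Require Import complex.
From mathcomp Require Import ring.
From Stdlib Require Setoid Morphisms.
Import Order.TTheory GRing.Theory Num.Theory.
Import numFieldNormedType.Exports.
Local Open Scope classical_set_scope.
Local Open Scope ring_scope.
Set Implicit Arguments. Unset Strict Implicit. Unset Printing Implicit Defensive.

#[local] Instance bigop_ext (R I : Type) (idx : R) (r : seq I) :
  Morphisms.Proper (Morphisms.respectful (Morphisms.pointwise_relation I eq) eq)
    (@bigop R I idx r).
Proof. by move=> F1 F2 /funext ->. Qed.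

(* Exchanges the k-th and (k+1)-th of several nested summations. *)
Ltac swap_sums k :=
  lazymatch k with
  | O => rewrite exchange_big /=
  | S ?k' => under eq_bigr => ? _ do swap_sums k'
  end.

Section Contraction.
Variables (C : comRingType) (n : nat).
Local Notation I := 'I_n.
Implicit Types (P Q S : I -> I -> C) (A B : I -> I -> I -> C).

(* contr P Q S A B = P^{i a} Q^{j b} S^{r k} A_{ijk} B_{abr}, summed over all six
   indices; |T|^2 is contr G G G T Tb with G the inverse metric. *)
Definition contr P Q S A B : C :=
  \sum_i \sum_j \sum_a \sum_b \sum_r \sum_k P i a * Q j b * S r k * A i j k * B a b r.

Lemma eq_sum6 (F1 F2 : I -> I -> I -> I -> I -> I -> C) :
  (forall i j a b r k, F1 i j a b r k = F2 i j a b r k) ->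
  \sum_i \sum_j \sum_a \sum_b \sum_r \sum_k F1 i j a b r k =
  \sum_i \sum_j \sum_a \sum_b \sum_r \sum_k F2 i j a b r k.
Proof. by move=> E; do 6 (apply: eq_bigr => ? _); apply: E. Qed.

Lemma sum6D (F1 F2 : I -> I -> I -> I -> I -> I -> C) :
  \sum_i \sum_j \sum_a \sum_b \sum_r \sum_k (F1 i j a b r k + F2 i j a b r k) =
  \sum_i \sum_j \sum_a \sum_b \sum_r \sum_k F1 i j a b r k +
  \sum_i \sum_j \sum_a \sum_b \sum_r \sum_k F2 i j a b r k.
Proof. by do 6 (rewrite -big_split; apply: eq_bigr => ? _). Qed.

Lemma sum6N (F : I -> I -> I -> I -> I -> I -> C) :
  \sum_i \sum_j \sum_a \sum_b \sum_r \sum_k - F i j a b r k =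
  - \sum_i \sum_j \sum_a \sum_b \sum_r \sum_k F i j a b r k.
Proof. by do 6 (rewrite -sumrN; apply: eq_bigr => ? _). Qed.

Lemma contrE P Q S A B : contr P Q S A B =
  \sum_i \sum_j \sum_k \sum_a \sum_b \sum_r P i a * Q j b * S r k * A i j k * B a b r.
Proof. by symmetry; swap_sums 2%N; swap_sums 3%N; swap_sums 4%N. Qed.

Lemma contr_sum_iajb P Q S A B : contr P Q S A B =
  \sum_i \sum_a \sum_j \sum_b \sum_r \sum_k P i a * Q j b * S r k * A i j k * B a b r.
Proof. by rewrite /contr; swap_sums 1%N. Qed.

Lemma contr_sum_rk P Q S A B : contr P Q S A B =
  \sum_r \sum_k \sum_i \sum_a \sum_j \sum_b P i a * Q j b * S r k * A i j k * B a b r.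
Proof.
rewrite /contr; swap_sums 3%N; swap_sums 2%N; swap_sums 1%N; swap_sums 0%N.
by swap_sums 4%N; swap_sums 3%N; swap_sums 2%N; swap_sums 1%N; swap_sums 3%N.
Qed.

Lemma eq_contrA P Q S A1 A2 B :
  (forall i j k, A1 i j k = A2 i j k) -> contr P Q S A1 B = contr P Q S A2 B.
Proof. by move=> eA; apply: eq_sum6 => *; rewrite eA. Qed.

Lemma eq_contrB P Q S A B1 B2 :
  (forall a b r, B1 a b r = B2 a b r) -> contr P Q S A B1 = contr P Q S A B2.
Proof. by move=> eB; apply: eq_sum6 => *; rewrite eB. Qed.

Lemma contr_swap12 P Q S A B :
  contr P Q S A B = contr Q P S (fun i j k => A j i k) (fun a b r => B b a r).
Proof. by rewrite /contr; swap_sums 0%N; swap_sums 2%N; apply: eq_sum6 => *; ring. Qed.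

Lemma contrDA P Q S A1 A2 B :
  contr P Q S (fun i j k => A1 i j k + A2 i j k) B = contr P Q S A1 B + contr P Q S A2 B.
Proof. by rewrite /contr -sum6D; apply: eq_sum6 => *; ring. Qed.

Lemma contrBA P Q S A1 A2 B :
  contr P Q S (fun i j k => A1 i j k - A2 i j k) B = contr P Q S A1 B - contr P Q S A2 B.
Proof. by rewrite /contr -sum6N -sum6D; apply: eq_sum6 => *; ring. Qed.

Lemma contrDB P Q S A B1 B2 :
  contr P Q S A (fun a b r => B1 a b r + B2 a b r) = contr P Q S A B1 + contr P Q S A B2.
Proof. by rewrite /contr -sum6D; apply: eq_sum6 => *; ring. Qed.

Lemma contrBB P Q S A B1 B2 :
  contr P Q S A (fun a b r => B1 a b r - B2 a b r) = contr P Q S A B1 - contr P Q S A B2.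
Proof. by rewrite /contr -sum6N -sum6D; apply: eq_sum6 => *; ring. Qed.

Lemma contrN1 P Q S A B : contr (fun i a => - P i a) Q S A B = - contr P Q S A B.
Proof. by rewrite /contr -sum6N; apply: eq_sum6 => *; ring. Qed.

Lemma contrN2 P Q S A B : contr P (fun j b => - Q j b) S A B = - contr P Q S A B.
Proof. by rewrite /contr -sum6N; apply: eq_sum6 => *; ring. Qed.

Lemma contrN3 P Q S A B : contr P Q (fun r k => - S r k) A B = - contr P Q S A B.
Proof. by rewrite /contr -sum6N; apply: eq_sum6 => *; ring. Qed.

Lemma contr_swap12_alt P Q S A B :
  (forall i j k, A j i k = - A i j k) -> (forall a b r, B b a r = - B a b r) ->
  contr P Q S A B = contr Q P S A B.
Proof.
by move=> Aalt Balt; rewrite contr_swap12 /contr; apply: eq_sum6 => *; rewrite Aalt Balt; ring.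
Qed.

Lemma contr_alt1 P S N B : (forall a b r, B b a r = - B a b r) ->
  contr P P S (fun i j k => N i j k - N j i k) B = 2%:R * contr P P S N B.
Proof.
move=> Balt; rewrite contrBA.
have -> : contr P P S (fun i j k => N j i k) B = - contr P P S N B.
  by rewrite contr_swap12 /contr -sum6N; apply: eq_sum6 => *; rewrite Balt; ring.
ring.
Qed.

Lemma contr_alt2 P S A M : (forall i j k, A j i k = - A i j k) ->
  contr P P S A (fun a b r => M a b r - M b a r) = 2%:R * contr P P S A M.
Proof.
move=> Aalt; rewrite contrBB.
have -> : contr P P S A (fun a b r => M b a r) = - contr P P S A M.
  by rewrite contr_swap12 /contr -sum6N; apply: eq_sum6 => *; rewrite Aalt; ring.
ring.
Qed.

End Contraction.

Section RaisedIndices.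
Variables (C : comRingType) (n : nat).
Local Notation I := 'I_n.
Variables (G H : I -> I -> C).
Implicit Types (P Q S : I -> I -> C) (A B : I -> I -> I -> C).

Definition hup i j := \sum_a \sum_b G a j * H a b * G i b.

Definition pairing (X : I -> I -> C) := \sum_i \sum_j hup i j * X i j.

Definition Q1c A B i j := \sum_k \sum_l \sum_m \sum_a G k l * G m a * A i k a * B j l m.
Definition Q2c A B i j := \sum_k \sum_l \sum_m \sum_a G k l * G m a * B l a i * A k m j.

Lemma pairing_lin (c : C) (X Y : I -> I -> C) :
  pairing (fun i j => c * X i j + Y i j) = c * pairing X + pairing Y.
Proof.
rewrite /pairing mulr_sumr -big_split; apply: eq_bigr => i _.
by rewrite mulr_sumr -big_split /=; apply: eq_bigr => j _; ring.
Qed.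

Lemma contr_hup_Q1 A B : contr hup G G A B = pairing (Q1c A B).
Proof.
rewrite contr_sum_iajb /pairing; apply: eq_bigr => i _; apply: eq_bigr => a _.
by rewrite /Q1c; do 4 (rewrite mulr_sumr; apply: eq_bigr => ? _); ring.
Qed.

Lemma contr_hup_Q2 A B : contr G G hup A B = pairing (Q2c A B).
Proof.
rewrite contr_sum_rk /pairing; apply: eq_bigr => r _; apply: eq_bigr => k _.
by rewrite /Q2c; do 4 (rewrite mulr_sumr; apply: eq_bigr => ? _); ring.
Qed.

Lemma contr_lower3 P Q A B :
  contr P Q G (fun i j k => \sum_q \sum_l G q l * A i j l * H q k) B = contr P Q hup A B.
Proof.
rewrite /contr /hup; do 5 (apply: eq_bigr => ? _).
repeat setoid_rewrite mulr_sumr; repeat setoid_rewrite mulr_suml.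
swap_sums 0%N; swap_sums 1%N; swap_sums 0%N.
by do 3 (apply: eq_bigr => ? _); ring.
Qed.

Lemma contr_lower_conj P Q A B :
  contr P Q G A (fun a b r => \sum_q \sum_l G l q * B a b l * H r q) = contr P Q hup A B.
Proof.
rewrite /contr /hup; do 4 (apply: eq_bigr => ? _).
repeat setoid_rewrite mulr_sumr; repeat setoid_rewrite mulr_suml.
swap_sums 2%N; swap_sums 1%N; swap_sums 0%N; swap_sums 1%N.
by do 4 (apply: eq_bigr => ? _); ring.
Qed.

End RaisedIndices.

Lemma subr_shift (C : comRingType) (x y a b : C) : x - y = (x - a) - (y - b) + (a - b).
Proof. by ring. Qed.

Lemma is_derive_ext (K : numFieldType) (V W : normedModType K) (f h : V -> W)
    (x v : V) (df dh : W) :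
  f =1 h -> df = dh -> is_derive x v f df -> is_derive x v h dh.
Proof. by move=> /funext -> ->. Qed.

Section ComplexDirectionalDerivative.
Variables (R : realType) (n : nat).
Local Notation Pt := (Pt R n).
Implicit Types (f h : Pt -> R[i]) (p v : Pt) (a b c : R[i]).

Definition is_Dc v f p c :=
  is_derive p v (fun q => complex.Re (f q)) (complex.Re c) /\
  is_derive p v (fun q => complex.Im (f q)) (complex.Im c).

Definition cderivable v f p :=
  derivable (fun q => complex.Re (f q)) p v /\ derivable (fun q => complex.Im (f q)) p v.

Lemma is_Dc_val v f p c : is_Dc v f p c -> Dc v f p = c.
Proof.
by case: c => a b [[_ er] [_ ei]]; rewrite /Dc; congr Complex; [exact: er|exact: ei].
Qed.

Lemma cderivableP v f p : cderivable v f p -> is_Dc v f p (Dc v f p).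
Proof. by move=> [/derivableP ? /derivableP ?]. Qed.

Lemma is_Dc_cderivable v f p c : is_Dc v f p c -> cderivable v f p.
Proof. by move=> [[? _] [? _]]. Qed.

Lemma is_Dc_ext v p f h a b : f =1 h -> a = b -> is_Dc v f p a -> is_Dc v h p b.
Proof. by move=> /funext -> ->. Qed.

Lemma near_eq_is_Dc v p f h a :
  (\forall q \near p, f q = h q) -> is_Dc v f p a -> is_Dc v h p a.
Proof.
move=> fh [fr fi]; split; apply: near_eq_is_derive; try eassumption;
  by apply: filterS fh => q ->.
Qed.

Lemma near_eq_Dc v p f h : (\forall q \near p, f q = h q) -> Dc v f p = Dc v h p.
Proof.
move=> fh.
have eRe : \forall q \near p, complex.Re (f q) = complex.Re (h q) by apply: filterS fh => q ->.
have eIm : \forall q \near p, complex.Im (f q) = complex.Im (h q) by apply: filterS fh => q ->.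
by rewrite /Dc (near_eq_derive _ eRe) (near_eq_derive _ eIm).
Qed.

Lemma is_Dc_unique v f p a b : is_Dc v f p a -> is_Dc v f p b -> a = b.
Proof. by move=> /is_Dc_val <- /is_Dc_val. Qed.

Lemma is_Dc_cst v p c : is_Dc v (fun=> c) p 0.
Proof. by split; apply: is_derive_cst. Qed.

Lemma is_DcD v p f h a b : is_Dc v f p a -> is_Dc v h p b ->
  is_Dc v (fun q => f q + h q) p (a + b).
Proof.
move=> [fr fi] [hr hi].
split; [apply: is_derive_ext (is_deriveD fr hr)|apply: is_derive_ext (is_deriveD fi hi)];
  by [move=> q; rewrite fctE; case: (f q) (h q) => [? ?] [? ?]|case: (a) (b) => [? ?] [? ?]].
Qed.

Lemma is_DcB v p f h a b : is_Dc v f p a -> is_Dc v h p b ->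
  is_Dc v (fun q => f q - h q) p (a - b).
Proof.
move=> [fr fi] [hr hi].
split; [apply: is_derive_ext (is_deriveB fr hr)|apply: is_derive_ext (is_deriveB fi hi)];
  by [move=> q; rewrite !fctE /=; case: (f q) (h q) => [? ?] [? ?]|case: (a) (b) => [? ?] [? ?]].
Qed.

Lemma is_DcM v p f h a b : is_Dc v f p a -> is_Dc v h p b ->
  is_Dc v (fun q => f q * h q) p (a * h p + f p * b).
Proof.
move=> [fr fi] [hr hi]; split.
- apply: is_derive_ext (is_deriveB (is_deriveM fr hr) (is_deriveM fi hi)).
    by move=> q; rewrite !fctE; case: (f q) (h q) => [? ?] [? ?].
  by move: (a) (b) (f p) (h p) => [? ?] [? ?] [? ?] [? ?] /=; rewrite /GRing.scale /=; ring.
- apply: is_derive_ext (is_deriveD (is_deriveM fr hi) (is_deriveM fi hr)).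
    by move=> q; rewrite !fctE; case: (f q) (h q) => [? ?] [? ?].
  by move: (a) (b) (f p) (h p) => [? ?] [? ?] [? ?] [? ?] /=; rewrite /GRing.scale /=; ring.
Qed.

Lemma is_DcZ v p (k : R[i]) f a : is_Dc v f p a -> is_Dc v (fun q => k * f q) p (k * a).
Proof. by move/(is_DcM (is_Dc_cst v p k)); apply: is_Dc_ext; rewrite // mul0r add0r. Qed.

Lemma is_Dc_conj v p f a : is_Dc v f p a -> is_Dc v (fun q => conjc (f q)) p (conjc a).
Proof.
move=> [fr fi]; split; first by apply: is_derive_ext fr => [q|]; [case: (f q)|case: (a)].
by apply: is_derive_ext (is_deriveN fi) => [q|]; [rewrite !fctE /=; case: (f q)|case: (a)].
Qed.

Lemma Dc_conj v p f : cderivable v f p -> Dc v (fun q => conjc (f q)) p = conjc (Dc v f p).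
Proof. by move=> /cderivableP /is_Dc_conj /is_Dc_val. Qed.

Lemma is_Dc_sum v p (I : Type) (r : seq I) (P : pred I) (F : I -> Pt -> R[i])
    (c : I -> R[i]) :
  (forall i, P i -> is_Dc v (F i) p (c i)) ->
  is_Dc v (fun q => \sum_(i <- r | P i) F i q) p (\sum_(i <- r | P i) c i).
Proof.
move=> dF; elim: r => [|x r IH].
  by apply: is_Dc_ext (is_Dc_cst v p 0) => [q|]; rewrite big_nil.
case Px: (P x).
  by apply: is_Dc_ext (is_DcD (dF x Px) IH) => [q|]; rewrite big_cons Px.
by apply: is_Dc_ext IH => [q|]; rewrite big_cons Px.
Qed.

Lemma cderivable_ext v p f h : f =1 h -> cderivable v f p -> cderivable v h p.
Proof. by move=> /funext ->. Qed.

Lemma cderivable_near v p f h :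
  (\forall q \near p, f q = h q) -> cderivable v f p -> cderivable v h p.
Proof. by move=> fh /cderivableP /(near_eq_is_Dc fh) /is_Dc_cderivable. Qed.

Lemma cderivable_cst v p c : cderivable v (fun=> c) p.
Proof. exact: is_Dc_cderivable (is_Dc_cst v p c). Qed.

Lemma cderivableD v p f h :
  cderivable v f p -> cderivable v h p -> cderivable v (fun q => f q + h q) p.
Proof. by move=> /cderivableP df /cderivableP dh; apply: is_Dc_cderivable (is_DcD df dh). Qed.

Lemma cderivableM v p f h :
  cderivable v f p -> cderivable v h p -> cderivable v (fun q => f q * h q) p.
Proof. by move=> /cderivableP df /cderivableP dh; apply: is_Dc_cderivable (is_DcM df dh). Qed.

Lemma cderivable_big v p (I : Type) (r : seq I) (P : pred I)
    (op : R[i] -> R[i] -> R[i]) (idx : R[i]) (F : I -> Pt -> R[i]) :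
  (forall f h, cderivable v f p -> cderivable v h p ->
     cderivable v (fun q => op (f q) (h q)) p) ->
  (forall i, P i -> cderivable v (F i) p) ->
  cderivable v (fun q => \big[op/idx]_(i <- r | P i) F i q) p.
Proof.
move=> dop dF; elim: r => [|x r IH].
  by apply: cderivable_ext (cderivable_cst v p idx) => q; rewrite big_nil.
case Px: (P x).
  by apply: cderivable_ext (dop _ _ (dF x Px) IH) => q; rewrite big_cons Px.
by apply: cderivable_ext IH => q; rewrite big_cons Px.
Qed.

Lemma cderivable_det v p m (A : Pt -> 'M[R[i]]_m) :
  (forall i j, cderivable v (fun q => A q i j) p) ->
  cderivable v (fun q => \det (A q)) p.
Proof.
move=> dA; apply: cderivable_big => [f h|s _]; first exact: cderivableD.
apply: cderivableM; first exact: cderivable_cst.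
by apply: cderivable_big => [f h|i _]; [exact: cderivableM|exact: dA].
Qed.

Lemma cderivable_cofactor v p m (A : Pt -> 'M[R[i]]_m) (i j : 'I_m) :
  (forall k l, cderivable v (fun q => A q k l) p) ->
  cderivable v (fun q => cofactor (A q) i j) p.
Proof.
move=> dA; apply: cderivableM; first exact: cderivable_cst.
by apply: cderivable_det => k l; apply: cderivable_ext (dA _ _) => q; rewrite !mxE.
Qed.

Lemma cderivableV v p f :
  f p != 0 -> cderivable v f p -> cderivable v (fun q => (f q)^-1) p.
Proof.
move=> fp0 [fr fi].
pose re q := complex.Re (f q); pose im q := complex.Im (f q).
have dN : derivable (re * re + im * im) p v := derivableD (derivableM fr fr) (derivableM fi fi).
have Np0 : (re * re + im * im) p != 0.
  move: fp0; rewrite !fctE /re /im; case: (f p) => a b ab0 /=.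
  rewrite -!expr2 paddr_eq0 ?sqr_ge0 // !sqrf_eq0.
  by apply: contra ab0 => /andP[/eqP -> /eqP ->].
have dNV := derivableV Np0 dN.
have Ref : (fun q => complex.Re ((f q)^-1)) = re * (fun q => ((re * re + im * im) q)^-1).
  by apply/funext => q; rewrite !fctE /re /im; case: (f q) => a b /=; rewrite !expr2.
have Imf : (fun q => complex.Im ((f q)^-1)) = - (im * (fun q => ((re * re + im * im) q)^-1)).
  by apply/funext => q; rewrite !fctE /re /im; case: (f q) => a b /=; rewrite !expr2.
by split; [move: (derivableM fr dNV); rewrite -Ref|move: (derivableN (derivableM fi dNV)); rewrite -Imf].
Qed.

Lemma is_Dc_contr m v q (P Q S : Pt -> 'I_m -> 'I_m -> R[i])
    (A B : Pt -> 'I_m -> 'I_m -> 'I_m -> R[i]) dP dQ dS dA dB :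
  (forall i j, is_Dc v (fun x => P x i j) q (dP i j)) ->
  (forall i j, is_Dc v (fun x => Q x i j) q (dQ i j)) ->
  (forall i j, is_Dc v (fun x => S x i j) q (dS i j)) ->
  (forall i j k, is_Dc v (fun x => A x i j k) q (dA i j k)) ->
  (forall i j k, is_Dc v (fun x => B x i j k) q (dB i j k)) ->
  is_Dc v (fun x => contr (P x) (Q x) (S x) (A x) (B x)) q
    (contr dP (Q q) (S q) (A q) (B q) + contr (P q) dQ (S q) (A q) (B q)
     + contr (P q) (Q q) dS (A q) (B q) + contr (P q) (Q q) (S q) dA (B q)
     + contr (P q) (Q q) (S q) (A q) dB).
Proof.
move=> dP' dQ' dS' dA' dB'; rewrite /contr -!sum6D.
do 6 (apply: is_Dc_sum => ? _).
by apply: is_Dc_ext (is_DcM (is_DcM (is_DcM (is_DcM (dP' _ _) (dQ' _ _)) (dS' _ _))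
  (dA' _ _ _)) (dB' _ _ _)) => //; ring.
Qed.

End ComplexDirectionalDerivative.

Lemma exists_small_pos (R : realFieldType) (K m : R) :
  0 <= K -> 0 < m -> exists2 t, 0 < t & t * K < m.
Proof.
move=> K0 m0; have K1 : 0 < K + 1 by rewrite ltr_wpDl.
exists (m / (K + 1)); first by rewrite divr_gt0.
by rewrite mulrAC ltr_pdivrMr // ltr_pM2l // ltrDl.
Qed.

Section SecondDerivativesCommute.
Variables (R : realType) (V : normedModType R).
Implicit Types (G : V -> R) (a b c p u v w : V).

Lemma is_derive_line G a v (t : R) : derivable G (a + t *: v) v ->
  is_derive t 1 (fun s : R => G (a + s *: v)) ('D_v G (a + t *: v)).
Proof.
have E : (fun h : R => h^-1 *: (((fun s : R => G (a + s *: v)) \o shift t) (h *: 1)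
                                 - G (a + t *: v)))
  = (fun h => h^-1 *: ((G \o shift (a + t *: v)) (h *: v) - G (a + t *: v))).
  by apply/funext => h /=; rewrite [h *: 1]mulr1 scalerDl addrCA.
by move=> dG; apply: DeriveDef; rewrite /derivable /derive E.
Qed.

Lemma is_derive_translate G b c u : derivable G (b + c) u ->
  is_derive b u (fun x => G (x + c)) ('D_u G (b + c)).
Proof.
have E : (fun h : R => h^-1 *: (((fun x => G (x + c)) \o shift b) (h *: u) - G (b + c)))
  = (fun h => h^-1 *: ((G \o shift (b + c)) (h *: u) - G (b + c))).
  by apply/funext => h /=; rewrite addrA.
by move=> dG; apply: DeriveDef; rewrite /derivable /derive E.
Qed.

Lemma mvt_line G a v (t : R) : 0 < t ->
  (forall s, 0 <= s <= t -> derivable G (a + s *: v) v) ->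
  exists2 c, 0 <= c <= t & G (a + t *: v) - G a = t * 'D_v G (a + c *: v).
Proof.
move=> t0 dG.
have dG' s : 0 <= s <= t -> is_derive s 1 (fun s => G (a + s *: v)) ('D_v G (a + s *: v)).
  by move=> /dG; apply: is_derive_line.
have dMVT : forall s, s \in `]0, t[ ->
    is_derive s 1 (fun s => G (a + s *: v)) ('D_v G (a + s *: v)).
  by move=> s; rewrite in_itv /= => /andP[s0 st]; apply: dG'; rewrite !ltW.
have cG : {within `[0, t], continuous (fun s => G (a + s *: v))}.
  by apply: derivable_within_continuous => s; rewrite in_itv /= => /dG' [].
have [c] := MVT t0 dMVT cG.
rewrite in_itv /= => /andP[c0 ct]; rewrite scale0r addr0 subr0 mulrC => E.
by exists c; rewrite ?ltW.
Qed.

Definition second_difference G p u w (t : R) :=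
  G (p + t *: u + t *: w) - G (p + t *: u) - G (p + t *: w) + G p.

Lemma second_differenceC G p u w t :
  second_difference G p u w t = second_difference G p w u t.
Proof.
by rewrite /second_difference (addrAC p (t *: w)) [_ - G (p + t *: w)]addrAC.
Qed.

Lemma second_difference_mvt G p u w (t rho : R) :
  0 < t -> t * (`|u| + `|w|) < rho ->
  (forall q, `|p - q| < rho -> derivable G q u /\ derivable ('D_u G) q w) ->
  exists2 q, `|p - q| <= t * (`|u| + `|w|) &
    second_difference G p u w t = t ^+ 2 * 'D_w ('D_u G) q.
Proof.
move=> t0 trho dG.
have tt : 0 <= t <= t by rewrite ltW /=.
have t00 : 0 <= (0 : R) <= t by rewrite lexx ltW.
have dist_p s r : 0 <= s <= t -> 0 <= r <= t ->
    `|p - (p + s *: u + r *: w)| <= t * (`|u| + `|w|).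
  move=> /andP[s0 st] /andP[r0 rt].
  rewrite -addrA opprD addrA subrr sub0r normrN mulrDr.
  apply: le_trans (ler_normD _ _) _; rewrite !normrZ !ger0_norm //.
  by apply: lerD; apply: ler_wpM2r.
have {}dG s r : 0 <= s <= t -> 0 <= r <= t ->
    derivable G (p + s *: u + r *: w) u /\ derivable ('D_u G) (p + s *: u + r *: w) w.
  by move=> hs hr; apply: dG; apply: le_lt_trans (dist_p _ _ hs hr) trho.
pose Phi x := G (x + t *: w) - G x.
have dPhi s : 0 <= s <= t -> is_derive (p + s *: u) u Phi
    ('D_u G (p + s *: u + t *: w) - 'D_u G (p + s *: u)).
  move=> hs; apply: is_deriveB; first exact/is_derive_translate/(dG _ _ hs tt).1.
  by apply: derivableP; have := (dG _ _ hs t00).1; rewrite scale0r addr0.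
have [c hc Ec] := mvt_line t0 (fun s hs => let: DeriveDef dP _ := dPhi s hs in dP).
have [d hd Ed] := mvt_line (a := p + c *: u) t0 (fun r hr => (dG _ _ hc hr).2).
exists (p + c *: u + d *: w); first exact: dist_p.
have -> : second_difference G p u w t = Phi (p + t *: u) - Phi p.
  by rewrite /second_difference /Phi addrAC; ring.
by rewrite Ec; have [_ ->] := dPhi c hc; rewrite Ed mulrA expr2.
Qed.

Lemma nbhs_norm_lt p (P : V -> Prop) :
  (\forall q \near p, P q) -> exists2 d : R, 0 < d & forall q, `|p - q| < d -> P q.
Proof. by move=> /nbhs_normP[d d0 dP]; exists d => // q; apply: dP. Qed.

Lemma derive2C G p u w :
  (\forall q \near p, [/\ derivable G q u, derivable G q w,
                         derivable ('D_u G) q w & derivable ('D_w G) q u]) ->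
  {for p, continuous ('D_w ('D_u G))} -> {for p, continuous ('D_u ('D_w G))} ->
  'D_u ('D_w G) p = 'D_w ('D_u G) p.
Proof.
move=> /nbhs_norm_lt[rho rho0 dG] cuw cwu.
apply/eqP; rewrite -subr_eq0 -normr_le0; apply/ler_addgt0Pr => e e0; rewrite add0r.
have e2 : 0 < e / 2 by rewrite divr_gt0.
have [d1 d10 near1] := nbhs_norm_lt (cvgr_dist_lt _ _ cuw _ e2).
have [d2 d20 near2] := nbhs_norm_lt (cvgr_dist_lt _ _ cwu _ e2).
have [t t0 tm] : exists2 t, 0 < t & t * (`|u| + `|w|) < Num.min rho (Num.min d1 d2).
  by apply: exists_small_pos; rewrite ?addr_ge0 // !lt_min rho0 d10 d20.
move: tm; rewrite !lt_min => /and3P[trho td1 td2].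
rewrite [`|u| + _]addrC in td2; have trho' := trho; rewrite [`|u| + _]addrC in trho'.
have [q1 hq1 E1] := second_difference_mvt t0 trho
  (fun q hq => let: And4 du _ duw _ := dG q hq in conj du duw).
have [q2 hq2 E2] := second_difference_mvt t0 trho'
  (fun q hq => let: And4 _ dw _ dwu := dG q hq in conj dw dwu).
have tt0 : t ^+ 2 != 0 by rewrite expf_neq0 // gt_eqF.
have E12 := mulfI tt0 (etrans (esym E1) (etrans (second_differenceC _ _ _ _ _) E2)).
have n1 := near1 q1 (le_lt_trans hq1 td1).
have n2 := near2 q2 (le_lt_trans hq2 td2).
rewrite -E12 in n2; rewrite distrC in n1.
apply: le_trans (ler_distD ('D_w ('D_u G) q1) _ _) _.
rewrite [e]splitr; exact: ltW (ltrD n2 n1).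
Qed.

End SecondDerivativesCommute.

Section SmoothHermitianFamily.
Variables (R : realType) (n : nat) (D : set (Pt R n)).
Variable g : 'I_n -> 'I_n -> Pt R n -> R[i].
Hypotheses (D_open : open D) (g_smooth : smooth_hermitian_family D g).
Local Notation Pt := (Pt R n).
Local Notation e_s := (e_s R n).

Lemma near_D q : D q -> \forall x \near q, D x.
Proof. by move=> Dq; apply: D_open. Qed.

Section SmoothFunction.
Variable F : Pt -> R.
Hypothesis F_smooth : smooth_on D F.

Lemma smooth_derivable q v : D q -> derivable F q v.
Proof. by move=> Dq; have [dF _] := F_smooth 1; apply/diff_derivable/dF. Qed.

Lemma smooth_derivable2 q v w : D q -> derivable ('D_w F) q v.
Proof.
by move=> Dq; have [_ /(_ w) [dF _]] := F_smooth 2; apply/diff_derivable/dF.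
Qed.

Lemma smooth_derive2C q u w : D q -> 'D_u ('D_w F) q = 'D_w ('D_u F) q.
Proof.
have cont2 u' w' : D q -> {for q, continuous ('D_w' ('D_u' F))}.
  by move=> Dq; have [_ /(_ u') [_ /(_ w')]] := F_smooth 2; apply.
move=> Dq; apply: derive2C; [|exact: cont2|exact: cont2].
by apply: filterS (near_D Dq) => x Dx; split;
  [apply: smooth_derivable|apply: smooth_derivable|apply: smooth_derivable2|apply: smooth_derivable2].
Qed.

End SmoothFunction.

Lemma g_smooth_parts i j : smooth_on D (fun q => complex.Re (g i j q)) /\
  smooth_on D (fun q => complex.Im (g i j q)).
Proof. by case: g_smooth => sg _ _; apply: sg. Qed.

Lemma g_conj q i j : D q -> g i j q = conjc (g j i q).
Proof. by case: g_smooth => _ hg _ Dq; apply: hg. Qed.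

Lemma cderivable_g v q i j : D q -> cderivable v (g i j) q.
Proof. by move=> Dq; have [? ?] := g_smooth_parts i j; split; apply: smooth_derivable. Qed.

Lemma cderivable_hh v q i j : D q -> cderivable v (hh g i j) q.
Proof. by move=> Dq; have [? ?] := g_smooth_parts i j; split; apply: smooth_derivable2. Qed.

Lemma hh_conj q i j : D q -> hh g i j q = conjc (hh g j i q).
Proof.
move=> Dq; rewrite /hh /ds -Dc_conj; last exact: cderivable_g.
by apply: near_eq_Dc; apply: filterS (near_D Dq) => x; apply: g_conj.
Qed.

(* Smoothness lets d/ds commute with the coordinate derivatives (Schwarz). *)
Lemma is_Dc_ds_Dc w q i j : D q ->
  is_Dc e_s (Dc w (g i j)) q (Dc w (hh g i j) q).
Proof.
move=> Dq; have [gr gi] := g_smooth_parts i j.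
split; (apply: DeriveDef; first exact: smooth_derivable2); exact: smooth_derive2C.
Qed.

Lemma is_Dc_ds_dz k q i j : D q -> is_Dc e_s (dz k (g i j)) q (dz k (hh g i j) q).
Proof.
move=> Dq; apply: is_DcZ; apply: is_DcB; first exact: is_Dc_ds_Dc.
by apply: is_DcZ; apply: is_Dc_ds_Dc.
Qed.

Lemma is_Dc_ds_Tor q i j k : D q ->
  is_Dc e_s (Tor g i j k) q (dz i (hh g j k) q - dz j (hh g i k) q).
Proof. by move=> Dq; apply: is_DcB; apply: is_Dc_ds_dz. Qed.

Lemma is_Dc_ds_Torb q i j k : D q ->
  is_Dc e_s (Torb g i j k) q (conjc (dz i (hh g j k) q - dz j (hh g i k) q)).
Proof. by move=> Dq; apply/is_Dc_conj/is_Dc_ds_Tor. Qed.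

Lemma dzb_hh q j l m : D q -> dzb j (hh g m l) q = conjc (dz j (hh g l m) q).
Proof.
move=> Dq; have hh_near : \forall x \near q, hh g m l x = conjc (hh g l m x).
  by apply: filterS (near_D Dq) => x; apply: hh_conj.
rewrite /dzb /dz !(near_eq_Dc _ hh_near) !Dc_conj; try exact: cderivable_hh.
rewrite rmorphM rmorphB rmorphM fmorphV rmorph_nat; congr (_ * _).
move: (Dc _ _ q) (Dc _ _ q) => [a b] [c d]; apply/eqP; rewrite eq_complex /=.
by apply/andP; split; apply/eqP; ring.
Qed.

Definition gmx (q : Pt) : 'M[R[i]]_n := \matrix_(a, b) g a b q.

Lemma gmx_unit q : D q -> gmx q \in unitmx.
Proof.
move=> Dq; rewrite unitmxE unitfE; apply/negP => /det0P[v v0 vM].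
have [j vj] : exists j, v 0 j != 0.
  apply/existsP; apply: contraR v0; rewrite negb_exists => /forallP v_0.
  by apply/eqP/rowP => j; rewrite mxE; apply/eqP; move: (v_0 j); rewrite negbK.
case: g_smooth => _ _ /(_ q Dq (v 0) (ex_intro _ j vj)).
rewrite exchange_big /= big1 ?ltxx // => k _; rewrite -mulr_suml.
have /rowP/(_ k) := vM; rewrite !mxE => vMk.
by rewrite (eq_bigr (fun i => v 0 i * gmx q i k)) ?vMk ?mul0r // => i _; rewrite mxE.
Qed.

Lemma ginvE q i j : D q -> ginv g q i j = (\det (gmx q))^-1 * cofactor (gmx q) i j.
Proof. by move=> Dq; rewrite /ginv -/(gmx q) /invmx gmx_unit // !mxE. Qed.

Lemma cderivable_ginv v q i j : D q -> cderivable v (fun x => ginv g x i j) q.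
Proof.
move=> Dq; have dM k l : cderivable v (fun x => gmx x k l) q.
  by apply: cderivable_ext (cderivable_g v k l Dq) => x; rewrite mxE.
apply: (@cderivable_near _ _ _ _ (fun x => (\det (gmx x))^-1 * cofactor (gmx x) i j)).
  by apply: filterS (near_D Dq) => x Dx; rewrite ginvE.
apply: cderivableM; last exact: cderivable_cofactor.
by apply: cderivableV (cderivable_det dM); rewrite -unitfE -unitmxE gmx_unit.
Qed.

Lemma ginv_conj q a b : D q -> conjc (ginv g q a b) = ginv g q b a.
Proof.
move=> Dq; rewrite /ginv -/(gmx q).
have -> : conjc (invmx (gmx q) b a) = map_mx conjc (invmx (gmx q)) b a by rewrite mxE.
have gT : map_mx conjc (gmx q) = (gmx q)^T.
  by apply/matrixP => x y; rewrite !mxE (g_conj x y Dq) conjcK.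
by rewrite map_invmx gT -trmx_inv mxE.
Qed.

Lemma gmx_ginv q i k : D q -> \sum_j g k j q * ginv g q i j = (k == i)%:R.
Proof.
move=> Dq; have /matrixP/(_ k i) := mulmxV (gmx_unit Dq).
by rewrite !mxE => <-; apply: eq_bigr => j _; rewrite mxE.
Qed.

(* Differentiate g g^-1 = 1 and solve for the derivative of g^-1. *)
Lemma is_Dc_ds_ginv q i j : D q ->
  is_Dc e_s (fun x => ginv g x i j) q
    (- \sum_a \sum_b ginv g q a j * hh g a b q * ginv g q i b).
Proof.
move=> Dq; pose dG i' j' := Dc e_s (fun x => ginv g x i' j') q.
have dgginv i' k : \sum_j (hh g k j q * ginv g q i' j + g k j q * dG i' j) = 0.
  apply: (@is_Dc_unique _ _ e_s (fun x => \sum_j g k j x * ginv g x i' j) q).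
    apply: is_Dc_sum => l _; apply: is_DcM; first exact/cderivableP/cderivable_g.
    exact/cderivableP/cderivable_ginv.
  apply: near_eq_is_Dc (is_Dc_cst _ _ (k == i')%:R).
  by apply: filterS (near_D Dq) => x Dx; rewrite gmx_ginv.
pose Y := \matrix_(j', i') dG i' j'.
pose H := \matrix_(a, b) hh g a b q.
have MY : gmx q *m Y = - (H *m invmx (gmx q)).
  apply/matrixP => k i'; apply/eqP; rewrite !mxE -addr_eq0 addrC -big_split /=.
  by apply/eqP; rewrite -[RHS](dgginv i' k); apply: eq_bigr => j' _; rewrite !mxE.
have := mulKmx (gmx_unit Dq) Y; rewrite MY mulmxN mulmxA => /matrixP/(_ j i) Yji.
apply: is_Dc_ext (cderivableP (cderivable_ginv e_s i j Dq)) => //.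
have -> : Dc e_s (fun x => ginv g x i j) q = Y j i by rewrite mxE.
rewrite -Yji !mxE; congr (- _).
rewrite exchange_big; apply: eq_bigr => b _; rewrite !mxE mulr_suml.
by apply: eq_bigr => a _; rewrite !mxE.
Qed.

End SmoothHermitianFamily.

Section TorsionVariation.
Variables (R : realType) (n : nat) (D : set (Pt R n)).
Variable g : 'I_n -> 'I_n -> Pt R n -> R[i].
Hypotheses (D_open : open D) (g_smooth : smooth_hermitian_family D g).
Variable p : Pt R n.
Hypothesis Dp : D p.

Local Notation G := (ginv g p).
Local Notation H := (fun a b => hh g a b p).
Local Notation T := (fun i j k => Tor g i j k p).
Local Notation Tb := (fun i j k => Torb g i j k p).
Local Notation X := (fun i j k => dz i (hh g j k) p).
Local Notation Nh := (fun i j k => nabh g i j k p).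
Local Notation Nhb := (fun i j k => nabhb g i j k p).

Lemma Tor_alt i j k : T j i k = - T i j k.
Proof. by rewrite /Tor opprB. Qed.

Lemma Torb_alt i j k : Tb j i k = - Tb i j k.
Proof. by rewrite /Torb Tor_alt rmorphN. Qed.

Lemma ds_normT2 : ds (normT2 g) p =
  contr (fun i j => - hup G H i j) G G T Tb + contr G (fun i j => - hup G H i j) G T Tb
  + contr G G (fun i j => - hup G H i j) T Tb
  + contr G G G (fun i j k => X i j k - X j i k) Tb
  + contr G G G T (fun a b r => conjc (X a b r - X b a r)).
Proof.
apply: is_Dc_val.
have -> : normT2 g = fun x => contr (ginv g x) (ginv g x) (ginv g x)
    (fun i j k => Tor g i j k x) (fun i j k => Torb g i j k x).
  by apply/funext => x; rewrite contrE.
apply: is_Dc_contr => *.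
1-3: exact: (is_Dc_ds_ginv D_open g_smooth _ _ Dp).
- exact: (is_Dc_ds_Tor D_open g_smooth _ _ _ Dp).
- exact: (is_Dc_ds_Torb D_open g_smooth _ _ _ Dp).
Qed.

Lemma ds_Tor_decomp i j k : X i j k - X j i k =
  (Nh i j k - Nh j i k) + \sum_q \sum_l G q l * T i j l * H q k.
Proof.
have -> : \sum_q \sum_l G q l * T i j l * H q k =
    \sum_q Gam g i j q p * hh g q k p - \sum_q Gam g j i q p * hh g q k p.
  rewrite -sumrB; apply: eq_bigr => q _; rewrite /Gam !mulr_suml -sumrB.
  by apply: eq_bigr => l _; rewrite /Tor; ring.
exact: subr_shift.
Qed.

Lemma ds_Torb_decomp a b r : conjc (X a b r - X b a r) =
  (Nhb a b r - Nhb b a r) + \sum_q \sum_l G l q * Tb a b l * H r q.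
Proof.
have -> : \sum_q \sum_l G l q * Tb a b l * H r q =
    \sum_q conjc (Gam g a b q p) * hh g r q p - \sum_q conjc (Gam g b a q p) * hh g r q p.
  rewrite -sumrB; apply: eq_bigr => q _; rewrite /Gam !rmorph_sum !mulr_suml -sumrB.
  apply: eq_bigr => l _; rewrite /Torb /Tor -(ginv_conj g_smooth _ _ Dp).
  by move: (ginv g p q l) (dz a _ p) (dz b _ p) (hh g r q p) => x y z w; rewrite rmorphB !rmorphM; ring.
rewrite /nabhb (dzb_hh D_open g_smooth a b r Dp) (dzb_hh D_open g_smooth b a r Dp) rmorphB.
exact: subr_shift.
Qed.

Lemma pair_hE (Y : 'I_n -> 'I_n -> R[i]) : pair_h g Y p = pairing G H Y.
Proof.
rewrite /pair_h /pairing /hup; apply: eq_bigr => i _; apply: eq_bigr => j _.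
rewrite mulr_suml; apply: eq_bigr => a _; rewrite mulr_suml; apply: eq_bigr => q _.
ring.
Qed.

Lemma pair_nabh_TE :
  pair_nabh_T g p = 2^-1 * (contr G G G Nh Tb + contr G G G T Nhb).
Proof.
rewrite /pair_nabh_T !contr_sum_iajb -sum6D; congr (_ * _).
by apply: eq_sum6 => *; ring.
Qed.

End TorsionVariation.

Lemma four_half (F : numFieldType) : 4%:R * 2^-1 = 2%:R :> F.
Proof. by rewrite (_ : 4 = 2 * 2)%N // natrM mulfK // pnatr_eq0. Qed.

Theorem lemma10p5 (R : realType) (n : nat) (D : set (Pt R n))
  (g : 'I_n -> 'I_n -> Pt R n -> R[i]) :
  open D -> smooth_hermitian_family D g ->
  forall p, D p ->
    ds (normT2 g) p =
      pair_h g (fun i j => - 2%:R * Q1 g i j p + Q2 g i j p) p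
      + 4%:R * pair_nabh_T g p.
Proof.
move=> D_open g_smooth p Dp.
set G := ginv g p; set H := fun a b => hh g a b p.
set T := fun i j k => Tor g i j k p; set Tb := fun i j k => Torb g i j k p.
have Talt := Tor_alt g p; have Tbalt := Torb_alt g p.
rewrite (ds_normT2 D_open g_smooth Dp) pair_hE pair_nabh_TE pairing_lin.
have -> : (fun i j => Q1 g i j p) = Q1c G T Tb by [].
have -> : (fun i j => Q2 g i j p) = Q2c G T Tb by [].
rewrite contrN1 contrN2 contrN3 contr_hup_Q1 contr_hup_Q2.
rewrite [contr G (hup G H) _ _ _](contr_swap12_alt _ _ _ Talt Tbalt) contr_hup_Q1.
rewrite (eq_contrA _ _ _ _ (ds_Tor_decomp g p)) contrDA (contr_alt1 _ _ _ Tbalt).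
rewrite contr_lower3 contr_hup_Q2.
rewrite (eq_contrB _ _ _ _ (ds_Torb_decomp D_open g_smooth Dp)) contrDB (contr_alt2 _ _ _ Talt).
rewrite contr_lower_conj contr_hup_Q2.
have arith (a b c d : R[i]) : - a - a - b + (2%:R * c + b) + (2%:R * d + b) =
    - 2%:R * a + b + 4%:R * (2^-1 * (c + d)) by rewrite mulrA four_half; ring.
exact: arith.
Qed.
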